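(* Let $T=\{a,b,c,d,e\}$ be the semigroup with multiplication $ay=a$, $dy=d$, $ey=e$ for all $y\in T$, and $ba=bb=bd=a$, $bc=b$, $be=d$, $ca=cb=cd=a$, $cc=c$, $ce=e$. (This $T$ is the dual $(\ell_3^{\mathsf{bar}})^{\mathsf{op}}$.) Then (i) the identities satisfied by $T$ are axiomatized by $xy^2\approx xy$ and $xyz\approx xyzy$; (ii) the subpseudovariety of $\llbracket T\rrbracket$ defined by the identity $xyzx\approx xyxz$ is the unique maximal subpseudovariety of $\llbracket T\rrbracket$.
   Context: Identities are between words over a countably infinite alphabet of variables. A pseudovariety is a class of finite semigroups closed under finite direct products, subsemigroups and homomorphic images; $\llbracket S\rrbracket$ is the pseudovariety generated by $S$; a maximal subpseudovariety is a maximal proper subpseudovariety. *)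

From mathcomp Require Import all_boot.
Set Implicit Arguments. Unset Strict Implicit. Unset Printing Implicit Defensive.

Record finSemigroup := FinSemigroup {
  fs_car :> finType;
  fs_op : fs_car -> fs_car -> fs_car;
  fs_assoc : associative fs_op;
  fs_inhab : fs_car }.

Definition word := seq nat.

(** Value of a word under an assignment (the empty word is never used in identities). *)
Definition eval (S : finSemigroup) (f : nat -> S) (w : word) : S :=
  match w with
  | [::] => f 0
  | x :: t => foldl (fun a y => fs_op a (f y)) (f x) t
  end.

Definition satisfies (S : finSemigroup) (u v : word) : Prop :=
  forall f : nat -> S, eval f u = eval f v.

Inductive derives (Sigma : seq (word * word)) : word -> word -> Prop :=
| der_ax u v : (u, v) \in Sigma -> derives Sigma u v
| der_refl u : derives Sigma u u
| der_sym u v : derives Sigma u v -> derives Sigma v u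
| der_trans u v w : derives Sigma u v -> derives Sigma v w -> derives Sigma u w
| der_subst u v (s : nat -> word) : (forall x, s x != [::]) ->
    derives Sigma u v -> derives Sigma (flatten (map s u)) (flatten (map s v))
| der_mull w u v : derives Sigma u v -> derives Sigma (w ++ u) (w ++ v)
| der_mulr w u v : derives Sigma u v -> derives Sigma (u ++ w) (v ++ w).

Definition axiomatizes (Sigma : seq (word * word)) (S : finSemigroup) : Prop :=
  forall u v : word, u != [::] -> v != [::] ->
    (satisfies S u v <-> derives Sigma u v).

Definition hom (S R : finSemigroup) (f : S -> R) : Prop :=
  forall x y, f (fs_op x y) = fs_op (f x) (f y).

Lemma unit_assoc : associative (fun _ _ : unit => tt).
Proof. by []. Qed.
Definition trivialS : finSemigroup := @FinSemigroup unit (fun _ _ => tt) unit_assoc tt.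

Definition prod_op (S R : finSemigroup) (p q : (S * R)%type) : (S * R)%type :=
  (fs_op p.1 q.1, fs_op p.2 q.2).
Lemma prod_assoc (S R : finSemigroup) : associative (@prod_op S R).
Proof. by move=> [a b] [c d] [e g]; rewrite /prod_op /= !fs_assoc. Qed.
Definition prodS (S R : finSemigroup) : finSemigroup :=
  @FinSemigroup (S * R)%type (@prod_op S R) (@prod_assoc S R) (fs_inhab S, fs_inhab R).

(** Pseudovarieties: classes of finite semigroups closed under finite direct
    products (the empty product being the trivial semigroup), subsemigroups
    (i.e. injective homomorphisms into) and homomorphic images. *)
Definition pseudovariety (V : finSemigroup -> Prop) : Prop :=
  [/\ V trivialS,
      (forall S R, V S -> V R -> V (prodS S R)),
      (forall (S R : finSemigroup) (f : R -> S), hom f -> injective f -> V S -> V R)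
    & (forall (S R : finSemigroup) (f : S -> R), hom f ->
         (forall y, exists x, f x = y) -> V S -> V R)].

Definition gen (S : finSemigroup) : finSemigroup -> Prop :=
  fun R => forall V, pseudovariety V -> V S -> V R.

Definition subclass (U V : finSemigroup -> Prop) := forall S, U S -> V S.
Definition sameclass (U V : finSemigroup -> Prop) := forall S, U S <-> V S.

Definition maximal_sub (W V : finSemigroup -> Prop) : Prop :=
  [/\ pseudovariety W, subclass W V, ~ subclass V W &
      forall U, pseudovariety U -> subclass W U -> subclass U V ->
        sameclass U V \/ sameclass U W].

(** The semigroup T = {a,b,c,d,e} coded as 0,1,2,3,4. *)
Definition T_tab (x y : nat) : nat :=
  match x, y with
  | 1, 2 => 1
  | 1, 4 => 3
  | 1, _ => 0
  | 2, 2 => 2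
  | 2, 4 => 4
  | 2, _ => 0
  | x, _ => x
  end.
Definition T_op (x y : 'I_5) : 'I_5 := inord (T_tab x y).

Lemma T_tab_lt (x y : nat) : x < 5 -> T_tab x y < 5.
Proof. by case: x => [|[|[|[|[|x]]]]] //= _; case: y => [|[|[|[|[|y]]]]]. Qed.

Lemma T_tab_assoc (x y z : nat) : x < 5 -> y < 5 -> z < 5 ->
  T_tab x (T_tab y z) = T_tab (T_tab x y) z.
Proof.
by case: x => [|[|[|[|[|x]]]]] //; case: y => [|[|[|[|[|y]]]]] //;
   case: z => [|[|[|[|[|z]]]]].
Qed.

Lemma T_assoc : associative T_op.
Proof.
move=> x y z; apply: val_inj; rewrite /T_op /=.
rewrite !inordK ?T_tab_lt ?inordK ?T_tab_lt //.
by apply: T_tab_assoc.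
Qed.

Definition T : finSemigroup := @FinSemigroup 'I_5 T_op T_assoc ord0.

(** x y^2 ~ x y  and  x y z ~ x y z y  (x = 0, y = 1, z = 2). *)
Definition Sigma_T : seq (word * word) :=
  [:: ([:: 0; 1; 1], [:: 0; 1]); ([:: 0; 1; 2], [:: 0; 1; 2; 1])].

Definition W_T : finSemigroup -> Prop :=
  fun S => gen T S /\ satisfies S [:: 0; 1; 2; 0] [:: 0; 1; 0; 2].

From HB Require Import structures.
From mathcomp Require Import all_boot.
From Stdlib Require Import Classical.
Set Implicit Arguments. Unset Strict Implicit. Unset Printing Implicit Defensive.

(* Modulo x y^2 = x y and x y z = x y z y, in a word x w a letter of w that
   already occurred in w can be erased, so x w equals x followed by the letters
   of w in order of first occurrence.  T tells such normal forms apart: sending x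
   to d and all other letters to e recovers the first letter, and since c fixes b
   and c while b b, b e, c a, c e are left zeros, suitable assignments into
   {b, c, a, e} reveal which of two letters occurs first.

   If S in [[T]] fails x y z x = x y x z at f0, four substitutions preceded by
   prefixes pull f0 back to a map g from three letters into S^4.  A finite
   computation over the normal forms in three letters shows that words with equal
   values under g have equal values in T under x, y, z |-> b, c, e, which generate T.
   So T is a quotient of a subsemigroup of S^4 and S generates [[T]].  Hence every
   member of [[T]] outside the class defined by x y z x = x y x z generates [[T]],
   and that class is the unique maximal subpseudovariety. *)

(** * Evaluating words *)

Definition omul (S : finSemigroup) (a b : option S) : option S :=
  match a, b with
  | Some x, Some y => Some (fs_op x y)
  | None, _ => b
  | _, None => a
  end.

Lemma omulA (S : finSemigroup) : associative (@omul S).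
Proof. by case=> [x|] [y|] [z|] //=; rewrite fs_assoc. Qed.

Lemma omul1l (S : finSemigroup) : left_id None (@omul S).
Proof. by []. Qed.

Lemma omul1r (S : finSemigroup) : right_id None (@omul S).
Proof. by case. Qed.

HB.instance Definition _ (S : finSemigroup) :=
  Monoid.isLaw.Build (option S) None (@omul S) (@omulA S) (@omul1l S) (@omul1r S).

(* [option S] is the monoid S^1; the empty word evaluates to its identity [None]. *)
Definition eval1 (S : finSemigroup) (f : nat -> S) (w : word) : option S :=
  \big[@omul S/None]_(x <- w) Some (f x).

Definition subst_word (s : nat -> word) (w : word) : word := flatten (map s w).

Section Evaluation.
Variables (S : finSemigroup) (f : nat -> S).

Lemma foldl_left_zero (a : S) t :
  left_zero a (@fs_op S) -> foldl (fun b y => fs_op b (f y)) a t = a.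
Proof. by move=> a0; elim: t => //= y t; rewrite a0. Qed.

Lemma eval_left_zero x t : left_zero (f x) (@fs_op S) -> eval f (x :: t) = f x.
Proof. exact: foldl_left_zero. Qed.

Lemma eval1_cat u v : eval1 f (u ++ v) = omul (eval1 f u) (eval1 f v).
Proof. exact: big_cat. Qed.

Lemma eval1_eval w : w != [::] -> eval1 f w = Some (eval f w).
Proof.
case: w => // x t _; elim/last_ind: t => [|t y IH]; first by rewrite /eval1 big_seq1.
by rewrite -cats1 -cat_cons eval1_cat IH /eval1 big_seq1 /= foldl_cat.
Qed.

Lemma eval_cat u v :
  u != [::] -> v != [::] -> eval f (u ++ v) = fs_op (eval f u) (eval f v).
Proof.
move=> u0 v0; apply: Some_inj.
rewrite -[RHS]/(omul (Some _) (Some _)) -!eval1_eval ?eval1_cat //.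
by case: u u0.
Qed.

Lemma eval1_subst s u : (forall x, s x != [::]) ->
  eval1 f (subst_word s u) = eval1 (fun x => eval f (s x)) u.
Proof.
move=> s0; rewrite /eval1 /subst_word big_flatten big_map.
by apply: eq_bigr => x _; exact: eval1_eval.
Qed.

Lemma foldl_first_hit2 (s : S) (y z : nat) t :
  y != z -> (forall w, w != y -> w != z -> fs_op s (f w) = s) ->
  left_zero (fs_op s (f y)) (@fs_op S) -> left_zero (fs_op s (f z)) (@fs_op S) ->
  foldl (fun a w => fs_op a (f w)) s t =
    if index y t < index z t then fs_op s (f y)
    else if index z t < index y t then fs_op s (f z) else s.
Proof.
move=> yz fix_s zero_y zero_z; elim: t => [|w t IH] //=.
have [->|wy] := eqVneq w y; first by rewrite (negbTE yz) foldl_left_zero.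
have [->|wz] := eqVneq w z; first by rewrite foldl_left_zero.
by rewrite !ltnS fix_s.
Qed.

End Evaluation.

Lemma eq_eval (S : finSemigroup) (f g : nat -> S) w :
  f =1 g -> eval f w = eval g w.
Proof.
move=> fg; case: w => [|x t] /=; first exact: fg.
by rewrite fg; elim: t (g x) => //= y t IH a; rewrite fg IH.
Qed.

Lemma eval_hom (S R : finSemigroup) (h : S -> R) (f : nat -> S) w :
  hom h -> h (eval f w) = eval (fun n => h (f n)) w.
Proof.
by move=> hh; case: w => [|x t] //=; elim: t (f x) => //= y t IH a; rewrite IH hh.
Qed.

Lemma eval_prod (S R : finSemigroup) (f : nat -> prodS S R) w :
  eval f w = (eval (fun n => (f n).1) w, eval (fun n => (f n).2) w).
Proof.
case: w => [|x t] /=; first by case: (f 0).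
by elim: t (f x) => [|y t IH] [a b] //=; rewrite IH.
Qed.

(** * Pseudovarieties *)

Lemma satisfies_pseudovariety u v : pseudovariety (fun S => satisfies S u v).
Proof.
split.
- by move=> f; case: (eval _ u); case: (eval _ v).
- by move=> S R Suv Ruv f; rewrite !eval_prod Suv Ruv.
- by move=> S R h hh h_inj Suv f; apply: h_inj; rewrite !eval_hom.
move=> S R h hh h_onto Suv g.
pose g' n := odflt (fs_inhab S) [pick x | h x == g n].
have hg' n : h (g' n) = g n.
  rewrite /g'; case: pickP => [x /eqP // | no_x].
  by have [x hx] := h_onto (g n); move: (no_x x); rewrite hx eqxx.
by rewrite -(eq_eval u hg') -(eq_eval v hg') -!eval_hom // Suv.
Qed.

Lemma pseudovarietyI (V W : finSemigroup -> Prop) :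
  pseudovariety V -> pseudovariety W -> pseudovariety (fun S => V S /\ W S).
Proof.
case=> V1 V_prod V_sub V_quo [W1 W_prod W_sub W_quo]; split=> //.
- by move=> S R [VS WS] [VR WR]; split; [apply: V_prod | apply: W_prod].
- move=> S R h hh h_inj [VS WS].
  by split; [apply: V_sub hh h_inj _ | apply: W_sub hh h_inj _].
- move=> S R h hh h_onto [VS WS].
  by split; [apply: V_quo hh h_onto _ | apply: W_quo hh h_onto _].
Qed.

Lemma gen_pseudovariety S : pseudovariety (gen S).
Proof.
split=> [V [] // | A B A_S B_S | A B h hh h_inj A_S | A B h hh h_onto A_S] V V_pv VS;
  have [_ V_prod V_sub V_quo] := V_pv.
- exact: V_prod (A_S V V_pv VS) (B_S V V_pv VS).
- exact: V_sub hh h_inj (A_S V V_pv VS).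
- exact: V_quo hh h_onto (A_S V V_pv VS).
Qed.

Lemma gen_refl S : gen S S.
Proof. by []. Qed.

Lemma gen_satisfies S R u v : satisfies S u v -> gen S R -> satisfies R u v.
Proof. by move=> Suv RS; apply: RS (satisfies_pseudovariety u v) Suv. Qed.

Lemma unique_maximal_sub (V W : finSemigroup -> Prop) :
  pseudovariety W -> subclass W V -> ~ subclass V W ->
  (forall S, V S -> ~ W S -> forall U, pseudovariety U -> U S -> subclass V U) ->
  maximal_sub W V /\ (forall U, maximal_sub U V -> sameclass U W).
Proof.
move=> W_pv WV VW V_gen; split.
  split=> // U U_pv WU UV.
  have [[S [US SW]] | UW] := classic (exists S, U S /\ ~ W S).
    by left=> R; split; [exact: UV | exact: V_gen (UV S US) SW U U_pv US R].
  right=> R; split; last exact: WU.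
  by move=> UR; apply: NNPP => RW; apply: UW; exists R.
move=> U [U_pv UV VU U_max].
have UW : subclass U W.
  move=> R UR; apply: NNPP => RW; apply: VU.
  exact: V_gen (UV R UR) RW U U_pv UR.
have [WV'|WU] := U_max W W_pv UW WV; last by move=> R; exact: iff_sym (WU R).
by case: VW => R /WV'.
Qed.

Lemma pseudovariety_prod4 V S :
  pseudovariety V -> V S -> V (prodS S (prodS S (prodS S S))).
Proof. by case=> _ V_prod _ _ VS; repeat apply: (V_prod). Qed.

Section Division.
Variables (R Q : finSemigroup) (g : nat -> R) (h : nat -> Q) (ws : seq word).
Hypotheses (ws_neq0 : {in ws, forall w, w != [::]})
  (ws_closed : {in ws &, forall w1 w2, exists2 w, w \in ws &
     eval g w = eval g (w1 ++ w2) /\ eval h w = eval h (w1 ++ w2)})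
  (ws_sep : {in ws &, forall w1 w2, eval g w1 = eval g w2 -> eval h w1 = eval h w2})
  (ws_onto : forall q : Q, exists2 w, w \in ws & eval h w = q).

Let img := map (eval g) ws.

Lemma img_mul : {in img &, forall x y, fs_op x y \in img}.
Proof.
move=> _ _ /mapP[w1 w1_in ->] /mapP[w2 w2_in ->].
have [w w_in [gw _]] := ws_closed w1_in w2_in.
by rewrite -eval_cat ?ws_neq0 // -gw map_f.
Qed.

Definition img_op (x y : {x : R | x \in img}) : {x : R | x \in img} :=
  exist _ (fs_op (val x) (val y)) (img_mul (valP x) (valP y)).

Lemma img_opA : associative img_op.
Proof. by move=> x y z; apply: val_inj; rewrite /= fs_assoc. Qed.

Lemma img_inhab : eval g (nth [::] ws 0) \in img.
Proof.
by have [w w_in _] := ws_onto (fs_inhab Q); apply/map_f/mem_nth; case: ws w_in.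
Qed.

Definition img_sg : finSemigroup :=
  @FinSemigroup {x : R | x \in img} img_op img_opA
    (exist (fun x => x \in img) _ img_inhab).

Definition img_rep (x : img_sg) : word := nth [::] ws (index (val x) img).

Lemma img_index_lt (x : img_sg) : index (val x) img < size ws.
Proof. by rewrite -(size_map (eval g)) index_mem (valP x). Qed.

Lemma img_rep_in x : img_rep x \in ws.
Proof. exact/mem_nth/img_index_lt. Qed.

Lemma eval_img_rep x : eval g (img_rep x) = val x.
Proof. by rewrite -(nth_map [::] (eval g [::])) ?img_index_lt // nth_index ?(valP x). Qed.

Definition img_proj (x : img_sg) : Q := eval h (img_rep x).

Lemma img_proj_hom : hom img_proj.
Proof.
move=> x y; have [w w_in [gw hw]] := ws_closed (img_rep_in x) (img_rep_in y).
rewrite /img_proj -eval_cat ?ws_neq0 ?img_rep_in // -hw; apply: ws_sep => //.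
  exact: img_rep_in.
by rewrite gw eval_cat ?ws_neq0 ?img_rep_in // !eval_img_rep.
Qed.

Lemma img_proj_onto (q : Q) : exists x : img_sg, img_proj x = q.
Proof.
have [w w_in <-] := ws_onto q.
exists (exist _ (eval g w) (map_f _ w_in)); apply: ws_sep => //; first exact: img_rep_in.
exact: eval_img_rep.
Qed.

Lemma pseudovariety_division V : pseudovariety V -> V R -> V Q.
Proof.
case=> _ _ V_sub V_quo VR; apply: V_quo img_proj_hom img_proj_onto _.
by apply: (V_sub R img_sg val) => //; exact: val_inj.
Qed.

End Division.

(** * Equational deduction and normal forms *)

Definition models (S : finSemigroup) (Sigma : seq (word * word)) : Prop :=
  forall u v, (u, v) \in Sigma -> [/\ u != [::], v != [::] & satisfies S u v].

Lemma derives_sound (S : finSemigroup) (Sigma : seq (word * word)) u v :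
  models S Sigma -> derives Sigma u v -> forall f : nat -> S, eval1 f u = eval1 f v.
Proof.
move=> S_Sigma; elim=> {u v}
  [u v uv | u | u v _ IH | u v w _ IH1 _ IH2 | u v s s0 _ IH | w u v _ IH | w u v _ IH] f.
- by have [u0 v0 Suv] := S_Sigma u v uv; rewrite !eval1_eval // Suv.
- by [].
- by rewrite IH.
- by rewrite IH1 IH2.
- by rewrite -/(subst_word s u) -/(subst_word s v) !eval1_subst // IH.
- by rewrite !eval1_cat IH.
- by rewrite !eval1_cat IH.
Qed.

Fixpoint add_new (T : eqType) (q t : seq T) : seq T :=
  if t is y :: t' then add_new (if y \in q then q else rcons q y) t' else q.

Lemma add_new_uniq (T : eqType) (q t : seq T) : uniq q -> uniq (add_new q t).
Proof.
elim: t q => //= y t IH q uq; apply: IH.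
by case: ifP => // yq; rewrite rcons_uniq yq.
Qed.

Lemma all_add_new (T : eqType) (P : pred T) (q t : seq T) :
  all P q -> all P t -> all P (add_new q t).
Proof.
elim: t q => //= y t IH q Pq /andP[Py Pt]; apply: IH => //.
by case: ifP => // _; rewrite all_rcons Py.
Qed.

Lemma sorted_index_uniq (T : eqType) (s : seq T) :
  uniq s -> sorted (fun x y => index x s < index y s) s.
Proof.
case: s => [// | x0 s'] us; set s := x0 :: s'.
suff : sorted ltn (map (index^~ s) s) by rewrite sorted_map.
rewrite -[X in map _ X](mkseq_nth x0) /mkseq -map_comp.
rewrite (_ : map _ _ = iota 0 (size s)) ?iota_ltn_sorted //.
rewrite -[RHS]map_id; apply/eq_in_map => i.
by rewrite mem_iota => lt_i; exact: index_uniq.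
Qed.

Lemma uniq_index_lt_inj (s1 s2 : seq nat) : uniq s1 -> uniq s2 ->
  (forall y z, (index y s1 < index z s1) = (index y s2 < index z s2)) -> s1 = s2.
Proof.
move=> u1 u2 s12.
pose z := (\max_(i <- s1 ++ s2) i).+1.
have : z \notin s1 ++ s2.
  apply/negP => z_in.
  by have := @leq_bigmax_seq _ _ xpredT id z z_in isT; rewrite ltnn.
rewrite mem_cat negb_or => /andP[z1 z2].
have mem12 : s1 =i s2.
  by move=> y; rewrite -!index_mem -(memNindex z1) -(memNindex z2) s12.
apply: (@irr_sorted_eq _ (fun x y => index x s1 < index y s1)) mem12.
- by move=> ? ? ?; exact: ltn_trans.
- by move=> ?; exact: ltnn.
- exact: sorted_index_uniq.
- by apply: sub_sorted (sorted_index_uniq u2) => x y; rewrite s12.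
Qed.

Fixpoint words (n k : nat) : seq word :=
  if k is k'.+1 then [seq x :: w | x <- iota 0 n, w <- words n k'] else [:: [::]].

Lemma mem_words n k w :
  (w \in words n k) = (size w == k) && all (fun x => x < n) w.
Proof.
elim: k w => [|k IH] [|x w] //=.
  by apply/allpairsP => -[[? ?] [_ _]].
rewrite eqSS; apply/allpairsP/idP => [[[y v] /= [y_in v_in [-> ->]]] | /and3P[wk xn wn]].
  by move: y_in v_in; rewrite mem_iota IH /= => -> /andP[-> ->].
by exists (x, w); rewrite mem_iota IH wk xn.
Qed.

Definition nf (w : word) : word := if w is x :: t then x :: add_new [::] t else [::].

Lemma nf_neq0 w : w != [::] -> nf w != [::].
Proof. by case: w. Qed.

Definition subst3 (a b c : word) (n : nat) : word :=
  match n with 0 => a | 1 => b | _ => c end.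

Lemma subst3_neq0 a b c n :
  a != [::] -> b != [::] -> c != [::] -> subst3 a b c n != [::].
Proof. by case: n => [|[|n]]. Qed.

Lemma derives_drop_repeat x q1 y q2 t :
  derives Sigma_T (x :: q1 ++ y :: q2 ++ y :: t) (x :: q1 ++ y :: q2 ++ t).
Proof.
set p := x :: q1.
suff e : derives Sigma_T (p ++ y :: q2 ++ [:: y]) (p ++ y :: q2).
  by have := der_mulr t e; rewrite /p -!catA /= -!catA.
case: q2 => [|z q2].
  have s_ne n : subst3 p [:: y] [:: y] n != [::] by case: n => [|[|]].
  by have := der_subst s_ne (@der_ax Sigma_T [:: 0; 1; 1] [:: 0; 1] isT).
have s_ne n : subst3 p [:: y] (z :: q2) n != [::] by case: n => [|[|]].
have := der_subst s_ne (@der_ax Sigma_T [:: 0; 1; 2] [:: 0; 1; 2; 1] isT).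
by rewrite /= cats0; exact: der_sym.
Qed.

Lemma derives_add_new x q t : derives Sigma_T (x :: q ++ t) (x :: add_new q t).
Proof.
elim: t q => [|y t IH] q /=; first by rewrite cats0; exact: der_refl.
case: ifP => [yq | _]; last by rewrite -cat_rcons; exact: IH.
apply: der_trans (IH q); case/splitPr: yq => q1 q2.
by rewrite -!catA; exact: derives_drop_repeat.
Qed.

Lemma derives_nf w : derives Sigma_T w (nf w).
Proof. by case: w => [|x t]; [exact: der_refl | exact: derives_add_new x [::] t]. Qed.

(** * The identities of T *)

Definition ta : T := Ordinal (isT : 0 < 5).
Definition tb : T := Ordinal (isT : 1 < 5).
Definition tc : T := Ordinal (isT : 2 < 5).
Definition td : T := Ordinal (isT : 3 < 5).
Definition te : T := Ordinal (isT : 4 < 5).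

(* [T_op] goes through [inord], which does not compute: facts about [T] are
   established on the underlying table [T_tab]. *)
Lemma T_opE (x y : T) : val (fs_op x y) = T_tab x y.
Proof. by rewrite /= /T_op inordK // T_tab_lt. Qed.

Lemma T_mul_eq (x y z : T) : T_tab x y = z -> fs_op x y = z.
Proof. by move=> e; apply: val_inj; rewrite T_opE. Qed.

Lemma T_left_zero (x : T) : val x \in [:: 0; 3; 4] -> left_zero x (@fs_op T).
Proof. by case: x => [[|[|[|[|[|?]]]]] ?] // _ y; apply: T_mul_eq. Qed.

Definition T_eval_tab (g : nat -> nat) (w : word) : nat :=
  if w is x :: t then foldl (fun a y => T_tab a (g y)) (g x) t else g 0.

Lemma val_eval_T (f : nat -> T) w :
  val (eval f w) = T_eval_tab (fun n => val (f n)) w.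
Proof. by case: w => [|x t] //=; elim: t (f x) => //= y t IH a; rewrite IH T_opE. Qed.

Lemma T_satisfies_Sigma_T u v : (u, v) \in Sigma_T -> satisfies T u v.
Proof.
rewrite !inE => /orP[] /eqP[-> ->] f; apply: val_inj; rewrite !val_eval_T /=.
  move: (val (f 0)) (val (f 1)) => x y.
  by case: x => [|[|[|x]]]; case: y => [|[|[|[|[|y]]]]].
move: (val (f 0)) (val (f 1)) (val (f 2)) => x y z.
by case: x => [|[|[|x]]]; case: y => [|[|[|[|[|y]]]]]; case: z => [|[|[|[|[|z]]]]].
Qed.

Lemma gen_T_models (S : finSemigroup) : gen T S -> models S Sigma_T.
Proof.
move=> ST u v uv; split; last exact: gen_satisfies (T_satisfies_Sigma_T uv) ST.
  by move: uv; rewrite !inE => /orP[] /eqP[-> _].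
by move: uv; rewrite !inE => /orP[] /eqP[_ ->].
Qed.

Lemma eval1_nf (S : finSemigroup) (f : nat -> S) w :
  gen T S -> eval1 f (nf w) = eval1 f w.
Proof. by move=> ST; rewrite (derives_sound (gen_T_models ST) (derives_nf w)). Qed.

Lemma eval_nf (S : finSemigroup) (f : nat -> S) w :
  gen T S -> w != [::] -> eval f (nf w) = eval f w.
Proof. by move=> ST w0; apply: Some_inj; rewrite -!eval1_eval ?nf_neq0 ?eval1_nf. Qed.

(* Letters other than [u] and [w] go to [c], which fixes [b] and [c]; the first
   of [u], [w] to occur turns the running product into a left zero. *)
Definition race (u w : nat) (vu vw : T) (n : nat) : T :=
  if n == u then vu else if n == w then vw else tc.

Lemma foldl_race (u w : nat) (vu vw s : T) t : u != w -> T_tab s 2 = s ->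
  T_tab s vu \in [:: 0; 3; 4] -> T_tab s vw \in [:: 0; 3; 4] ->
  foldl (fun a n => fs_op a (race u w vu vw n)) s t =
    if index u t < index w t then fs_op s vu
    else if index w t < index u t then fs_op s vw else s.
Proof.
move=> uw s_c zero_u zero_w.
have race_w : (if w == u then vu else if w == w then vw else tc) = vw.
  by rewrite eq_sym (negbTE uw) eqxx.
rewrite (foldl_first_hit2 t uw) /race.
- by rewrite eqxx race_w.
- by move=> n /negbTE -> /negbTE ->; exact: T_mul_eq.
- by rewrite eqxx; apply: T_left_zero; rewrite T_opE.
- by rewrite race_w; apply: T_left_zero; rewrite T_opE.
Qed.

Lemma T_index_lt_detected (x y z : nat) : y != z ->
  exists f : nat -> T, exists v : T,
    forall t, (eval f (x :: t) == v) = (index y t < index z t).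
Proof.
move=> yz; have [->|xy] := eqVneq x y.
  exists (race y z tb te), ta => t /=; rewrite {2}/race eqxx foldl_race //.
  by case: ltngtP; rewrite -val_eqE /= ?T_opE.
have [->|xz] := eqVneq x z.
  have zy : z != y by rewrite eq_sym.
  exists (race z y tb te), td => t /=; rewrite {2}/race eqxx foldl_race //.
  by case: ltngtP; rewrite -val_eqE /= ?T_opE.
exists (race y z te ta), te => t /=; rewrite {2}/race (negbTE xy) (negbTE xz).
rewrite foldl_race //.
by case: ltngtP; rewrite -val_eqE /= ?T_opE.
Qed.

Lemma T_eval_index_lt x t t' y z :
  (forall f : nat -> T, eval f (x :: t) = eval f (x :: t')) ->
  (index y t < index z t) = (index y t' < index z t').
Proof.
move=> tt'; have [-> | yz] := eqVneq y z; first by rewrite !ltnn.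
by have [f [v test]] := T_index_lt_detected x yz; rewrite -!test tt'.
Qed.

Lemma T_eval_head x t x' t' :
  (forall f : nat -> T, eval f (x :: t) = eval f (x' :: t')) -> x = x'.
Proof.
move=> tt'; have [// | x'x] := eqVneq x x'.
pose f n := if n == x then td else te.
have fx : f x = td by rewrite /f eqxx.
have fx' : f x' = te by rewrite /f eq_sym (negbTE x'x).
have zero_x : left_zero (f x) (@fs_op T) by rewrite fx; exact: T_left_zero.
have zero_x' : left_zero (f x') (@fs_op T) by rewrite fx'; exact: T_left_zero.
by move: (tt' f); rewrite !eval_left_zero // fx fx' => /(congr1 val).
Qed.

Lemma nf_eq_of_T_satisfies u v :
  u != [::] -> v != [::] -> satisfies T u v -> nf u = nf v.
Proof.
case: u v => [|x t] [|x' t'] // _ _ uv.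
have nf_uv (f : nat -> T) : eval f (nf (x :: t)) = eval f (nf (x' :: t')).
  by rewrite !eval_nf ?uv //; exact: gen_refl.
have xx' := T_eval_head nf_uv; subst x'.
congr (_ :: _); apply: uniq_index_lt_inj; rewrite ?add_new_uniq // => y z.
exact: T_eval_index_lt nf_uv.
Qed.

Theorem Sigma_T_axiomatizes_T : axiomatizes Sigma_T T.
Proof.
move=> u v u0 v0; split=> [uv | der f].
  apply: der_trans (derives_nf u) _; rewrite (nf_eq_of_T_satisfies u0 v0 uv).
  exact/der_sym/derives_nf.
apply: Some_inj; rewrite -!eval1_eval //.
exact: derives_sound (gen_T_models (@gen_refl T)) der f.
Qed.

(** * The unique maximal subpseudovariety *)

Definition nf3 : seq word :=
  [seq w <- flatten [seq words 3 k | k <- iota 1 4] | uniq (behead w)].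

Lemma nf_mem w : w != [::] -> all (fun x => x < 3) w -> nf w \in nf3.
Proof.
case: w => [|x t] // _ /andP[x3 t3]; set L := add_new [::] t.
have uL : uniq L by exact: add_new_uniq.
have L3 : all (fun x => x < 3) L by exact: all_add_new.
have sL : size L <= size (iota 0 3).
  by apply: (@uniq_leq_size _ L (iota 0 3) uL) => y /(allP L3); rewrite mem_iota.
rewrite mem_filter uL; apply/flatten_mapP; exists (size L).+1; first by rewrite mem_iota.
by rewrite mem_words /= eqxx x3.
Qed.

Definition T_letter (n : nat) : T := match n with 0 => tb | 1 => tc | _ => te end.

Lemma nf3_onto_T (q : T) : exists2 w, w \in nf3 & eval T_letter w = q.
Proof.
case: q => [[|[|[|[|[|//]]]]] ?];
  [exists [:: 0; 0] | exists [:: 0] | exists [:: 1] | exists [:: 0; 2] | exists [:: 2]];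
  by [| apply: val_inj; rewrite val_eval_T].
Qed.

Definition xyzx : word := [:: 0; 1; 2; 0].
Definition xyxz : word := [:: 0; 1; 0; 2].

Lemma T_not_xyzx_xyxz : ~ satisfies T xyzx xyxz.
Proof. by move/(_ T_letter)/(congr1 val); rewrite !val_eval_T. Qed.

Definition context := (word * (nat -> word))%type.

Definition separates (c : context) (n1 n2 : word) : bool :=
  has (fun t =>
    let w1 := nf (c.1 ++ subst_word c.2 n1 ++ t) in
    let w2 := nf (c.1 ++ subst_word c.2 n2 ++ t) in
    (w1 == xyzx) && (w2 == xyxz) || (w1 == xyxz) && (w2 == xyzx))
  [:: [:: 2; 0]; [:: 0; 2]].

Definition ctx1 : context := ([::], subst3 [:: 0; 1] [:: 1] [:: 2]).
Definition ctx2 : context := ([:: 0], subst3 [:: 0] [:: 1] [:: 2]).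
Definition ctx3 : context := ([:: 0; 1], subst3 [:: 0] [:: 0] [:: 2]).
Definition ctx4 : context := ([:: 0; 1], subst3 [:: 0] [:: 2] [:: 1]).

Definition ctx_separates (n1 n2 : word) : bool :=
  [|| separates ctx1 n1 n2, separates ctx2 n1 n2, separates ctx3 n1 n2 | separates ctx4 n1 n2].

(* A finite check over all pairs of the 48 normal forms on three letters. *)
Lemma nf3_separated : {in nf3 &, forall n1 n2,
  eval T_letter n1 = eval T_letter n2 \/ ctx_separates n1 n2}.
Proof.
pose T_val n := val (T_letter n).
have : allrel (fun n1 n2 =>
  (T_eval_tab T_val n1 == T_eval_tab T_val n2) || ctx_separates n1 n2) nf3 nf3.
  by vm_compute.
move/allrelP=> sep n1 n2 n1_in n2_in.
case/orP: (sep _ _ n1_in n2_in) => [/eqP e | ]; last by right.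
by left; apply: val_inj; rewrite !val_eval_T.
Qed.

Lemma nf3_words : {in nf3, forall w, (w != [::]) && all (fun x => x < 3) w}.
Proof. by apply/allP; vm_compute. Qed.

Section Separation.
Variables (S : finSemigroup) (f0 : nat -> S).
Hypotheses (S_in_T : gen T S) (f0_sep : eval f0 xyzx <> eval f0 xyxz).

Definition coord (c : context) (n : nat) : S := eval f0 (c.2 n).

Lemma coord_separates c n1 n2 :
  (forall n, c.2 n != [::]) -> n1 != [::] -> n2 != [::] ->
  eval (coord c) n1 = eval (coord c) n2 -> ~~ separates c n1 n2.
Proof.
move=> s_neq0 n1_neq0 n2_neq0 e; apply/hasPn => t _.
have e1 : eval1 (coord c) n1 = eval1 (coord c) n2 by rewrite !eval1_eval // e.
have e2 : eval1 f0 (nf (c.1 ++ subst_word c.2 n1 ++ t)) =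
          eval1 f0 (nf (c.1 ++ subst_word c.2 n2 ++ t)).
  by rewrite !eval1_nf // !eval1_cat !eval1_subst //; congr (omul _ (omul _ _)); exact: e1.
apply/negP => /orP[] /andP[/eqP e3 /eqP e4]; rewrite e3 e4 in e2; apply: f0_sep;
  apply: Some_inj; rewrite -!eval1_eval //.
Qed.

Let S4 := prodS S (prodS S (prodS S S)).

Definition g4 (n : nat) : S4 :=
  (coord ctx1 n, (coord ctx2 n, (coord ctx3 n, coord ctx4 n))).

Lemma g4_separates : {in nf3 &, forall n1 n2,
  eval g4 n1 = eval g4 n2 -> eval T_letter n1 = eval T_letter n2}.
Proof.
move=> n1 n2 n1_in n2_in; rewrite !eval_prod => -[e1 e2 e3 e4].
have /andP[n1_neq0 _] := nf3_words n1_in; have /andP[n2_neq0 _] := nf3_words n2_in.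
have sep c : (forall n, c.2 n != [::]) -> eval (coord c) n1 = eval (coord c) n2 ->
    separates c n1 n2 = false.
  by move=> s_neq0 e; apply/negbTE/coord_separates.
have [// | ] := nf3_separated n1_in n2_in.
by rewrite /ctx_separates !sep //; move=> n; apply: subst3_neq0.
Qed.

Lemma T_in_pseudovariety V : pseudovariety V -> V S -> V T.
Proof.
move=> V_pv VS; have V_S4 : V S4 := pseudovariety_prod4 V_pv VS.
have S4_in_T : gen T S4 := pseudovariety_prod4 (gen_pseudovariety T) S_in_T.
apply: (pseudovariety_division (g := g4) (h := T_letter) (ws := nf3)) V_pv V_S4.
- by move=> w /nf3_words /andP[].
- move=> w1 w2 /nf3_words /andP[w1_neq0 w1_3] /nf3_words /andP[w2_neq0 w2_3].
  have w12_neq0 : w1 ++ w2 != [::] by case: (w1) w1_neq0.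
  exists (nf (w1 ++ w2)); first by rewrite nf_mem // all_cat w1_3.
  by split; apply: eval_nf => //; exact: gen_refl.
- exact: g4_separates.
- exact: nf3_onto_T.
Qed.

End Separation.

Lemma gen_T_of_not_xyzx_xyxz S : gen T S -> ~ satisfies S xyzx xyxz ->
  forall U, pseudovariety U -> U S -> subclass (gen T) U.
Proof.
move=> S_in_T S_sep U U_pv US R R_in_T; apply: (R_in_T U U_pv).
have [f0 f0_sep] := not_all_ex_not _ _ S_sep.
exact: T_in_pseudovariety S_in_T f0_sep U U_pv US.
Qed.

Theorem proposition5p30 :
  axiomatizes Sigma_T T /\
  (maximal_sub W_T (gen T) /\
   forall U, maximal_sub U (gen T) -> sameclass U W_T).
Proof.
split; first exact: Sigma_T_axiomatizes_T.
apply: unique_maximal_sub.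
- exact: pseudovarietyI (gen_pseudovariety T) (satisfies_pseudovariety _ _).
- by move=> S [].
- by move=> gen_T_W; have [_] := gen_T_W T (@gen_refl T); exact: T_not_xyzx_xyxz.
- by move=> S S_in_T S_W; apply: gen_T_of_not_xyzx_xyxz => // S_sat; apply: S_W.
Qed.
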